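(* Let $G=(V,E,\Omega)$ be a connected finite graph with vertex set $V\subset\mathbb{R}^n$, edge set $E$ and a non-empty set $\Omega\subset V$, and let $f:\Omega\to\mathbb{R}^m$. If $u$ is a tight extension of $f$ on $G$, then $u$ is a Kirszbraun extension of $f$ on $G$, i.e. $u(x)=K(u,S(x))(x)$ for all $x\in V\setminus\Omega$ and $u(x)=f(x)$ for all $x\in\Omega$.
   Context: For $x\in V$, $S(x):=\{y\in V:(x,y)\in E\}$. $E(f)$ denotes the set of functions $V\to\mathbb{R}^m$ agreeing with $f$ on $\Omega$; $\|\cdot\|$ is the Euclidean norm. For a finite set $A\subset\mathbb{R}^n$, $g:A\to\mathbb{R}^m$ and $x\in\mathbb{R}^n\setminus A$, $K(g,A)(x)$ denotes the unique $y\in\mathbb{R}^m$ minimizing $\sup_{a\in A}\|g(a)-y\|/\|a-x\|$. For $w\in E(f)$ and $x\in V\setminus\Omega$, $Lw(x):=\sup_{y\in S(x)}\|w(y)-w(x)\|/\|y-x\|$. For $u,v\in E(f)$, $v$ is tighter than $u$ if $\max\{Lu(x):Lu(x)>Lv(x),\,x\in V\setminus\Omega\}>\max\{Lv(x):Lv(x)>Lu(x),\,x\in V\setminus\Omega\}$ (maximum over the empty set is $0$). An extension $u\in E(f)$ is a tight extension of $f$ on $G$ if no $v\in E(f)$ is tighter than $u$. *)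

From HB Require Import structures.
From mathcomp Require Import all_boot all_order all_algebra.
From mathcomp Require Import finmap.
From mathcomp Require Import reals.
From Stdlib Require Import ClassicalEpsilon.
Set Implicit Arguments. Unset Strict Implicit. Unset Printing Implicit Defensive.
Import Order.TTheory GRing.Theory Num.Theory.
Local Open Scope ring_scope.
Local Open Scope fset_scope.

Section Defs.
Variable R : realType.

Definition enorm (k : nat) (v : 'rV[R]_k) : R :=
  Num.sqrt (\sum_(i < k) (v ord0 i) ^+ 2).

Variables n m : nat.
Notation pt := 'rV[R]_n.
Notation val := 'rV[R]_m.

Definition nbhd (V : {fset pt}) (E : {fset pt * pt}) (x : pt) : {fset pt} :=
  [fset y in V | (x, y) \in E].

Definition is_graph (V : {fset pt}) (E : {fset pt * pt}) (Om : {fset pt}) : Prop :=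
  [/\ (forall p, p \in E -> (p.1 \in V) && (p.2 \in V)),
      (forall x y, (x, y) \in E -> (y, x) \in E),
      (forall x, (x, x) \notin E) &
      Om `<=` V].

Definition connected_graph (V : {fset pt}) (E : {fset pt * pt}) : Prop :=
  forall x y, x \in V -> y \in V ->
    exists p : seq pt, path (fun a b => (a, b) \in E) x p /\ last x p = y.

Definition ext_of (Om : {fset pt}) (f w : pt -> val) : Prop :=
  forall x, x \in Om -> w x = f x.

Definition Lip (V : {fset pt}) (E : {fset pt * pt}) (w : pt -> val) (x : pt) : R :=
  \big[Num.max/0]_(y <- nbhd V E x) (enorm (w y - w x) / enorm (y - x)).

Definition tighter (V : {fset pt}) (E : {fset pt * pt}) (Om : {fset pt})
    (v u : pt -> val) : Prop :=
  \big[Num.max/0]_(x <- V `\` Om | Lip V E v x < Lip V E u x) Lip V E u x >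
  \big[Num.max/0]_(x <- V `\` Om | Lip V E u x < Lip V E v x) Lip V E v x.

Definition tight_ext (V : {fset pt}) (E : {fset pt * pt}) (Om : {fset pt})
    (f u : pt -> val) : Prop :=
  ext_of Om f u /\ ~ exists v, ext_of Om f v /\ tighter V E Om v u.

Definition Kobj (g : pt -> val) (A : {fset pt}) (x : pt) (y : val) : R :=
  \big[Num.max/0]_(a <- A) (enorm (g a - y) / enorm (a - x)).

Definition Kirsz (g : pt -> val) (A : {fset pt}) (x : pt) : val :=
  epsilon (inhabits 0) (fun y => forall z, Kobj g A x y <= Kobj g A x z).

End Defs.

From HB Require Import structures.
From mathcomp Require Import all_boot all_order all_algebra.
From mathcomp Require Import finmap.
From mathcomp Require Import reals.
From Stdlib Require Import ClassicalEpsilon Classical.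
From mathcomp Require Import ring lra.
Set Implicit Arguments. Unset Strict Implicit. Unset Printing Implicit Defensive.
Import Order.TTheory GRing.Theory Num.Theory.
Local Open Scope ring_scope.
Local Open Scope fset_scope.

(* If u(x) did not minimize the Kirszbraun objective y |-> Kobj u S(x) x y,
   which is Lu(x) at y = u(x), moving u(x) to a better value z lowers Lu(x)
   and can raise Lu(w) at a neighbour w only up to the new value Lv(x) < Lu(x),
   so the modified extension is tighter than u.  Hence u(x) is a minimizer,
   and the minimizer is unique because the Euclidean norm is strictly convex:
   the midpoint of two distinct minimizers would do strictly better. *)

Section EuclideanNorm.
Variables (R : realType) (k : nat).
Local Notation vec := 'rV[R]_k.

Definition sqnorm (v : vec) : R := \sum_(i < k) (v ord0 i) ^+ 2.

Lemma sqnorm_ge0 (v : vec) : 0 <= sqnorm v.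
Proof. by apply: sumr_ge0 => i _; apply: sqr_ge0. Qed.

Lemma sqnorm_gt0 (v : vec) : v != 0 -> 0 < sqnorm v.
Proof.
move=> v_neq0; rewrite lt_def sqnorm_ge0 andbT; apply: contra v_neq0 => /eqP.
move=> /psumr_eq0P v0; apply/eqP/matrixP => i j; rewrite (ord1 i) mxE.
by apply/eqP; rewrite -sqrf_eq0 v0 // => l _; apply: sqr_ge0.
Qed.

Lemma enorm_ge0 (v : vec) : 0 <= enorm v.
Proof. exact: sqrtr_ge0. Qed.

Lemma enorm_gt0 (v : vec) : v != 0 -> 0 < enorm v.
Proof. by move=> v_neq0; rewrite sqrtr_gt0 sqnorm_gt0. Qed.

Lemma sqr_enorm (v : vec) : enorm v ^+ 2 = sqnorm v.
Proof. by rewrite sqr_sqrtr // sqnorm_ge0. Qed.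

Lemma enormB (y y' : vec) : enorm (y - y') = enorm (y' - y).
Proof.
by congr Num.sqrt; apply: eq_bigr => i _; rewrite -opprB mxE sqrrN.
Qed.

Lemma sqnorm_midpoint (p y y' : vec) :
  sqnorm (p - 2^-1 *: (y + y')) =
  (sqnorm (p - y) + sqnorm (p - y')) / 2 - sqnorm (y - y') / 4.
Proof.
rewrite /sqnorm (eq_bigr (fun i => ((p - y) ord0 i) ^+ 2 / 2 +
   ((p - y') ord0 i) ^+ 2 / 2 - ((y - y') ord0 i) ^+ 2 / 4)).
  by rewrite sumrB big_split /= -!mulr_suml mulrDl.
by move=> i _; rewrite !mxE; field.
Qed.

Lemma enorm_midpoint_lt (p y y' : vec) (c : R) : y != y' ->
  enorm (p - y) <= c -> enorm (p - y') <= c ->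
  enorm (p - 2^-1 *: (y + y')) < c.
Proof.
move=> yy' le_y le_y'.
have d_gt0 : 0 < sqnorm (y - y') by apply: sqnorm_gt0; rewrite subr_eq0.
have c_ge0 : 0 <= c := le_trans (enorm_ge0 _) le_y.
have sq_le (v : vec) : enorm v <= c -> sqnorm v <= c ^+ 2.
  by move=> le_v; rewrite -sqr_enorm ler_sqr ?nnegrE ?enorm_ge0.
have : sqnorm (p - 2^-1 *: (y + y')) < c ^+ 2.
  by rewrite sqnorm_midpoint; have := sq_le _ le_y; have := sq_le _ le_y'; lra.
by rewrite -sqr_enorm ltr_sqr ?nnegrE ?enorm_ge0.
Qed.

End EuclideanNorm.

Section Kirszbraun.
Variables (R : realType) (n m : nat).
Implicit Types (g : 'rV[R]_n -> 'rV[R]_m) (A : {fset 'rV[R]_n}) (x : 'rV[R]_n).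

Lemma Kobj_le g A x y a : a \in A ->
  enorm (g a - y) / enorm (a - x) <= Kobj g A x y.
Proof.
by move=> aA; apply: (le_bigmax_seq 0 a xpredT
  (fun a => enorm (g a - y) / enorm (a - x)) aA).
Qed.

Lemma Kobj_minimizer_uniq g A x y1 y2 :
  A != fset0 -> x \notin A ->
  (forall z, Kobj g A x y1 <= Kobj g A x z) ->
  (forall z, Kobj g A x y2 <= Kobj g A x z) -> y1 = y2.
Proof.
move=> /fset0Pn[a0 a0A] xA min1 min2; apply/eqP/negPn/negP => y12.
set c := Kobj g A x y1.
have c2 : Kobj g A x y2 = c by apply/eqP; rewrite eq_le min2 min1.
have dist_gt0 a : a \in A -> 0 < enorm (a - x).
  by move=> aA; apply: enorm_gt0; rewrite subr_eq0; apply: contraNneq xA => <-.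
have mid_lt a : a \in A -> enorm (g a - 2^-1 *: (y1 + y2)) < c * enorm (a - x).
  move=> aA; apply: enorm_midpoint_lt y12 _ _; rewrite -ler_pdivrMr ?dist_gt0 //.
    exact: Kobj_le.
  by rewrite -c2; apply: Kobj_le.
have c_gt0 : 0 < c.
  have := mid_lt _ a0A; have := dist_gt0 _ a0A.
  have := enorm_ge0 (g a0 - 2^-1 *: (y1 + y2)); nra.
have : Kobj g A x (2^-1 *: (y1 + y2)) < c.
  rewrite /Kobj big_seq; apply: bigmax_lt => // a aA.
  by rewrite ltr_pdivrMr ?dist_gt0 ?mid_lt.
by rewrite ltNge min1.
Qed.

Lemma Kirsz_minimizer g A x y :
  A != fset0 -> x \notin A ->
  (forall z, Kobj g A x y <= Kobj g A x z) -> Kirsz g A x = y.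
Proof.
move=> A0 xA min_y; apply: (Kobj_minimizer_uniq A0 xA _ min_y).
by apply: (epsilon_spec (inhabits 0)
  (fun y => forall z, Kobj g A x y <= Kobj g A x z)); exists y.
Qed.

End Kirszbraun.

Lemma bigmax_tighter (T : eqType) (R : realType) (s : seq T) (Lu Lv : T -> R) x :
  x \in s -> Lv x < Lu x -> (forall w, 0 <= Lv w) ->
  (forall w, w \in s -> w != x -> Lv w <= Num.max (Lu w) (Lv x)) ->
  \big[Num.max/0]_(w <- s | Lu w < Lv w) Lv w <
  \big[Num.max/0]_(w <- s | Lv w < Lu w) Lu w.
Proof.
move=> xs ltx Lv_ge0 Lv_le.
apply: (le_lt_trans _ (lt_le_trans ltx (le_bigmax_seq 0 x _ Lu xs ltx))).
rewrite big_seq_cond; apply: bigmax_le => // w /andP[ws ltw].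
have [wx | w_neq_x] := eqVneq w x; first by move: ltw; rewrite wx ltNge ltW.
by move: (Lv_le w ws w_neq_x); rewrite le_max leNgt ltw.
Qed.

Section Graph.
Variables (R : realType) (n m : nat).
Variables (V : {fset 'rV[R]_n}) (E : {fset 'rV[R]_n * 'rV[R]_n}).
Implicit Types (u : 'rV[R]_n -> 'rV[R]_m) (x w : 'rV[R]_n).

Lemma in_nbhd x y : (y \in nbhd V E x) = (y \in V) && ((x, y) \in E).
Proof. by rewrite inE. Qed.

Lemma Lip_ge0 u x : 0 <= Lip V E u x.
Proof. exact: bigmax_ge_id. Qed.

Lemma Lip_update_self u x z : (x, x) \notin E ->
  Lip V E [eta u with x |-> z] x = Kobj u (nbhd V E x) x z.
Proof.
move=> xx; apply: eq_big_seq => y; rewrite in_nbhd => /andP[_ xyE] /=.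
by rewrite eqxx; case: eqP => // yx; move: xyE; rewrite yx (negbTE xx).
Qed.

Lemma Lip_update_neighbour u x z w :
  (forall a b, (a, b) \in E -> (b, a) \in E) ->
  (forall p, p \in E -> (p.1 \in V) && (p.2 \in V)) -> w != x ->
  Lip V E [eta u with x |-> z] w <=
  Num.max (Lip V E u w) (Kobj u (nbhd V E x) x z).
Proof.
move=> Esym EV w_neq_x; rewrite [Lip _ _ _ w]big_seq.
apply: bigmax_le => [|y yN]; first by rewrite le_max Lip_ge0.
rewrite le_max /= (negbTE w_neq_x); have [yx | _] := eqVneq y x.
  apply/orP; right; move: yN; rewrite in_nbhd yx => /andP[_ /Esym xwE].
  have wN : w \in nbhd V E x by rewrite in_nbhd xwE andbT; case/andP: (EV _ xwE).
  by rewrite enormB (enormB x); apply: Kobj_le.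
by apply/orP; left; apply: (le_bigmax_seq 0 y xpredT
  (fun y => enorm (u y - u w) / enorm (y - w)) yN).
Qed.

Lemma nbhd_neq0 (Om : {fset 'rV[R]_n}) x :
  is_graph V E Om -> connected_graph V E -> Om != fset0 ->
  x \in V `\` Om -> nbhd V E x != fset0.
Proof.
move=> [EV _ _ OmV] conn /fset0Pn[o oOm]; rewrite inE => /andP[xOm xV].
have [[|a p] [/= xap last_xap]] := conn x o xV (fsubsetP OmV o oOm).
  by move: xOm; rewrite last_xap oOm.
case/andP: xap => xaE _; apply/fset0Pn; exists a.
by rewrite in_nbhd xaE andbT; case/andP: (EV _ xaE).
Qed.

End Graph.

Theorem mainTheorem2 (R : realType) (n m : nat)
    (V : {fset 'rV[R]_n}) (E : {fset 'rV[R]_n * 'rV[R]_n}) (Om : {fset 'rV[R]_n})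
    (f u : 'rV[R]_n -> 'rV[R]_m) :
  is_graph V E Om -> connected_graph V E -> Om != fset0 ->
  tight_ext V E Om f u ->
  (forall x, x \in V `\` Om -> u x = Kirsz u (nbhd V E x) x) /\
  (forall x, x \in Om -> u x = f x).
Proof.
move=> G conn Om0 [ext not_tighter]; split=> [x xVO|]; last exact: ext.
have [EV Esym Eirr _] := G.
have xN : x \notin nbhd V E x by rewrite in_nbhd (negbTE (Eirr x)) andbF.
have [min_ux | /not_all_ex_not[z /negP]] :=
  classic (forall z, Kobj u (nbhd V E x) x (u x) <= Kobj u (nbhd V E x) x z).
  by rewrite (Kirsz_minimizer (nbhd_neq0 G conn Om0 xVO) xN min_ux).
rewrite -ltNge -Lip_update_self // => z_better.
case: not_tighter; exists [eta u with x |-> z]; split.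
  move=> w wOm /=; case: eqP => [wx | _]; last exact: ext.
  by move: xVO; rewrite inE -wx wOm.
apply: bigmax_tighter xVO z_better (Lip_ge0 _ _ _) _ => w _.
rewrite Lip_update_self //; exact: Lip_update_neighbour.
Qed.
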